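(* Let $\mathcal{H}=\mathbb{C}^d$ with orthonormal classical basis $\{|0\rangle,\dots,|d-1\rangle\}$, and let $U_{CD}$ be the unitary on $\mathbb{C}^d\otimes\mathbb{C}^d$ given by $U_{CD}|i,j\rangle=|i,\,j\oplus_d i\rangle$ (so $U_{CD}|i\rangle|0\rangle=|i\rangle|i\rangle$). For every density matrix $\rho$ on $\mathbb{C}^d$, the output $\rho'=U_{CD}(\rho\otimes|0\rangle\langle0|)U_{CD}^\dagger$ satisfies $S_N(\rho')=N_S(\rho)$. In particular $\rho'$ is entangled if and only if $\rho$ is nonclassical, and if $\hat M$ is a Hermitian operator on $\mathbb{C}^d$ with $\mathrm{Tr}(\hat M\rho)>\max_i\langle i|\hat M|i\rangle$, then $\rho'$ is entangled.
   Context: $\oplus_d$ denotes addition modulo $d$. The superposition number $r(\psi)$ of a pure state $|\psi\rangle=\sum_i c_i|i\rangle$ is the number of nonzero coefficients $c_i$; for a mixed state, $N_S(\rho)=\inf\{\sup_i r(\psi_i):\rho=\sum_ip_i|\psi_i\rangle\langle\psi_i|\}$, the infimum over all decompositions of $\rho$ into pure states with $p_i>0$. The Schmidt rank $r(\Psi)$ of a pure bipartite state is the number of nonzero coefficients in its Schmidt decomposition, and the Schmidt number of a bipartite mixed state is $S_N(\rho)=\inf\{\sup_i r(\Psi_i):\rho=\sum_ip_i|\Psi_i\rangle\langle\Psi_i|\}$. Classical single-system states are those with $N_S=1$ (convex combinations of the $|i\rangle\langle i|$); a bipartite state is entangled iff its Schmidt number exceeds 1. *)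

(* Complex scalars: an arbitrary numClosedFieldType C
   (algebraically closed field with conjugation and the induced partial order,
   e.g. algC; the statement is proved uniformly for all such C). *)
From HB Require Import structures.
From mathcomp Require Import all_boot all_order all_algebra.
Set Implicit Arguments. Unset Strict Implicit. Unset Printing Implicit Defensive.
Import Order.TTheory GRing.Theory Num.Theory.
Local Open Scope ring_scope.

Section Quantum.
Variable C : numClosedFieldType.

Definition dag m n (A : 'M[C]_(m, n)) : 'M[C]_(n, m) := map_mx Num.conj A^T.

(* decoding of a product index a : 'I_(m*n) into the pair (i, j) with
   a = mxvec_index i j *)
Definition unpair m n (a : 'I_(m * n)) : 'I_m * 'I_n :=
  enum_val (cast_ord (esym (mxvec_cast m n)) a).

(* Kronecker (tensor) product; basis |i,j> of C^m (x) C^n is index mxvec_index i j *)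
Definition kron m1 n1 m2 n2 (A : 'M[C]_(m1, n1)) (B : 'M[C]_(m2, n2))
  : 'M[C]_(m1 * m2, n1 * n2) :=
  \matrix_(a, b) (A (unpair a).1 (unpair b).1 * B (unpair a).2 (unpair b).2).

Definition ket n (i : 'I_n) : 'cV[C]_n := delta_mx i 0.

Definition is_hermitian n (A : 'M[C]_n) : Prop := dag A = A.

Definition psd n (A : 'M[C]_n) : Prop :=
  is_hermitian A /\ forall v : 'cV[C]_n, 0 <= (dag v *m A *m v) 0 0.

Definition density n (rho : 'M[C]_n) : Prop := psd rho /\ \tr rho = 1.

Definition unit_vec n (v : 'cV[C]_n) : Prop := (dag v *m v) 0 0 = 1.

Definition sup_number n (v : 'cV[C]_n) : nat := #|[set i | v i 0 != 0]|.

Definition pure_decomp_with n (P : 'cV[C]_n -> Prop) (rho : 'M[C]_n) : Prop :=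
  exists (N : nat) (p : 'I_N -> C) (psi : 'I_N -> 'cV[C]_n),
    [/\ forall k, 0 < p k,
        forall k, unit_vec (psi k),
        forall k, P (psi k) &
        rho = \sum_(k < N) p k *: (psi k *m dag (psi k))].

Definition sup_number_le n (rho : 'M[C]_n) (k : nat) : Prop :=
  pure_decomp_with (fun v => (sup_number v <= k)%N) rho.

(* N_S(rho) = k : k is the infimum over decompositions of the sup of r(psi_i) *)
Definition is_NS n (rho : 'M[C]_n) (k : nat) : Prop :=
  sup_number_le rho k /\ forall m, sup_number_le rho m -> (k <= m)%N.

Definition orthonormal n r (u : 'I_r -> 'cV[C]_n) : Prop :=
  forall k l, (dag (u k) *m u l) 0 0 = (k == l)%:R.

Definition schmidt_decomp d (Psi : 'cV[C]_(d * d)) (r : nat) : Prop :=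
  exists (lam : 'I_r -> C) (u v : 'I_r -> 'cV[C]_d),
    [/\ forall k, 0 < lam k, orthonormal u, orthonormal v &
        Psi = \sum_(k < r) lam k *: kron (u k) (v k)].

Definition schmidt_rank_le d (Psi : 'cV[C]_(d * d)) (k : nat) : Prop :=
  exists r, (r <= k)%N /\ schmidt_decomp Psi r.

Definition schmidt_number_le d (rho : 'M[C]_(d * d)) (k : nat) : Prop :=
  pure_decomp_with (fun Psi => schmidt_rank_le Psi k) rho.

Definition is_SN d (rho : 'M[C]_(d * d)) (k : nat) : Prop :=
  schmidt_number_le rho k /\ forall m, schmidt_number_le rho m -> (k <= m)%N.

Definition entangled d (rho : 'M[C]_(d * d)) : Prop := ~ schmidt_number_le rho 1.

Definition nonclassical n (rho : 'M[C]_n) : Prop := ~ sup_number_le rho 1.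

Definition addmod d (hd : (0 < d)%N) (i j : 'I_d) : 'I_d :=
  Ordinal (ltn_pmod (i + j) hd).

Definition ord0' d (hd : (0 < d)%N) : 'I_d := Ordinal hd.

Definition Ucd d (hd : (0 < d)%N) : 'M[C]_(d * d) :=
  \sum_(i < d) \sum_(j < d)
     kron (ket i) (ket (addmod hd j i)) *m dag (kron (ket i) (ket j)).

Definition output d (hd : (0 < d)%N) (rho : 'M[C]_d) : 'M[C]_(d * d) :=
  Ucd hd *m kron rho (ket (ord0' hd) *m dag (ket (ord0' hd))) *m dag (Ucd hd).

End Quantum.

From HB Require Import structures.
From mathcomp Require Import all_boot all_order all_algebra.
Set Implicit Arguments. Unset Strict Implicit. Unset Printing Implicit Defensive.
Import Order.TTheory GRing.Theory Num.Theory.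
Local Open Scope ring_scope.

(* The controlled shift U_CD copies classical basis states, U_CD |i,0> = |i,i>,
   so the output state is  rho' = sum_(i,j) rho_ij |ii><jj|  (output_expand):
   rho' is the image of rho under the isometric "diagonal embedding"
   emb v = sum_i v_i |ii> of C^d into C^d (x) C^d.  The proof has three parts.
   1. Schmidt rank of emb v = superposition number of v.  Writing
      v_i = |v_i| (v_i/|v_i|) gives a Schmidt decomposition with r(v) terms
      (emb_schmidt_rank_le); conversely a Schmidt decomposition with r terms
      factors diag(v) through C^r, so r(v) <= rank diag(v) <= r
      (sup_number_le_schmidt).
   2. Decompositions of rho and rho' correspond.  Pushing a decomposition of rho
      along emb decomposes rho'; conversely rho' vanishes at |ab><ab| for a <> b,
      which by positivity forces every pure component of rho' into the image of
      emb (output_component_diagonal).  Hence N_S(rho) <= k iff S_N(rho') <= k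
      (sup_number_le_output).
   3. For a classical state Tr(M rho) is a convex combination of the diagonal
      entries <i|M|i>, so it cannot exceed all of them (classical_trace_bound).
   The theorem follows: 2 gives S_N = N_S and the entanglement criterion, and
   3 transported by 2 gives the witness criterion. *)

Local Notation pr := (@mxvec_index _ _).

Section MatrixToolkit.
Variable C : numClosedFieldType.

Lemma unpairK m n (i : 'I_m) (j : 'I_n) : unpair (pr i j) = (i, j).
Proof. by rewrite /unpair /mxvec_index cast_ordK enum_rankK. Qed.

Lemma unpairV m n (a : 'I_(m * n)) : pr (unpair a).1 (unpair a).2 = a.
Proof.
rewrite /unpair /mxvec_index -[(_, _)]surjective_pairing enum_valK.
exact: val_inj.
Qed.

Lemma eq_pr m n (a : 'I_(m * n)) i j : (a == pr i j) = (unpair a == (i, j)).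
Proof.
apply/eqP/eqP => [->|ea]; first by rewrite unpairK.
by rewrite -(unpairV a) ea.
Qed.

Lemma pr_eq m n (i i' : 'I_m) (j j' : 'I_n) :
  (pr i j == pr i' j') = (i == i') && (j == j').
Proof. by rewrite eq_pr unpairK xpair_eqE. Qed.

Lemma dagE m n (A : 'M[C]_(m, n)) i j : dag A i j = (A j i)^*.
Proof. by rewrite /dag !mxE. Qed.

Lemma dag_delta m n (i : 'I_m) (j : 'I_n) :
  dag (delta_mx i j : 'M[C]_(m, n)) = delta_mx j i.
Proof. by apply/matrixP => a b; rewrite dagE !mxE conjC_nat andbC. Qed.

Lemma dag_sum m n I (r : seq I) (P : pred I) (F : I -> 'M[C]_(m, n)) :
  dag (\sum_(k <- r | P k) F k) = \sum_(k <- r | P k) dag (F k).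
Proof.
apply/matrixP => a b; rewrite dagE !summxE rmorph_sum.
by apply: eq_bigr => k _; rewrite dagE.
Qed.

Lemma dagZ m n c (A : 'M[C]_(m, n)) : dag (c *: A) = c^* *: dag A.
Proof. by apply/matrixP => a b; rewrite dagE !mxE ?dagE rmorphM. Qed.

Lemma outer_entry n (v : 'cV[C]_n) a b : (v *m dag v) a b = v a 0 * (v b 0)^*.
Proof. by rewrite mxE big_ord1 dagE. Qed.

Lemma ket_inner n (i j : 'I_n) :
  (dag (delta_mx i 0 : 'cV[C]_n) *m (delta_mx j 0 : 'cV[C]_n)) 0 0 = (i == j)%:R.
Proof. by rewrite dag_delta mul_delta_mx_cond mulmxnE mxE !eqxx. Qed.

Lemma kron_delta m1 n1 m2 n2 (i : 'I_m1) (j : 'I_n1) (k : 'I_m2) (l : 'I_n2) :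
  kron (delta_mx i j : 'M[C]_(m1, n1)) (delta_mx k l : 'M[C]_(m2, n2))
  = delta_mx (pr i k) (pr j l).
Proof.
apply/matrixP => a b; rewrite -(unpairV a) -(unpairV b) /kron !mxE !unpairK.
by rewrite !pr_eq -natrM mulnb andbACA.
Qed.

Lemma kron_suml m1 n1 m2 n2 I (r : seq I) (P : pred I)
    (F : I -> 'M[C]_(m1, n1)) (B : 'M[C]_(m2, n2)) :
  kron (\sum_(k <- r | P k) F k) B = \sum_(k <- r | P k) kron (F k) B.
Proof.
apply/matrixP => a b; rewrite summxE /kron mxE summxE mulr_suml.
by apply: eq_bigr => k _; rewrite mxE.
Qed.

Lemma kronZl m1 n1 m2 n2 c (A : 'M[C]_(m1, n1)) (B : 'M[C]_(m2, n2)) :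
  kron (c *: A) B = c *: kron A B.
Proof. by apply/matrixP => a b; rewrite /kron !mxE mulrA. Qed.

Lemma sum2_delta (V : nmodType) m n (F : 'I_m -> 'I_n -> V) i j :
  \sum_k \sum_l F k l *+ ((k == i) && (l == j)) = F i j.
Proof.
rewrite (bigD1 i) //= [X in _ + X]big1 => [|k /negbTE nki]; last first.
  by apply: big1 => l _; rewrite nki mulr0n.
rewrite addr0 (bigD1 j) //= !eqxx mulr1n [X in _ + X]big1 ?addr0 // => l /negbTE ->.
by rewrite andbF mulr0n.
Qed.

Lemma sum_delta_l n (F : 'I_n -> C) i : \sum_j (i == j)%:R * F j = F i.
Proof.
rewrite (bigD1 i) //= eqxx mul1r big1 ?addr0 // => j nji.
by rewrite eq_sym (negbTE nji) mul0r.
Qed.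

Lemma sum_delta_r n (F : 'I_n -> C) i : \sum_j F j * (j == i)%:R = F i.
Proof. by rewrite -(sum_delta_l F i); apply: eq_bigr => j _; rewrite mulrC eq_sym. Qed.

Lemma trace_comb m N (p : 'I_N -> C) (F : 'I_N -> 'M[C]_m) :
  \tr (\sum_l p l *: F l) = \sum_l p l * \tr (F l).
Proof.
rewrite /mxtrace (eq_bigr (fun i => \sum_l p l * F l i i)) => [|i _].
  by rewrite exchange_big; apply: eq_bigr => l _; rewrite mulr_sumr.
by rewrite summxE; apply: eq_bigr => l _; rewrite mxE.
Qed.

Lemma trace_outer n (M : 'M[C]_n) (v : 'cV[C]_n) :
  \tr (M *m (v *m dag v)) = (dag v *m M *m v) 0 0.
Proof. by rewrite mulmxA mxtrace_mulC /mxtrace big_ord1 mulmxA. Qed.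

Lemma pure_comb_diag_eq0 n N (p : 'I_N -> C) (psi : 'I_N -> 'cV[C]_n) a :
  (forall l, 0 < p l) ->
  (\sum_l p l *: (psi l *m dag (psi l))) a a = 0 -> forall l, psi l a 0 = 0.
Proof.
move=> pp; rewrite summxE => sum0 l.
have ge0 l' : xpredT l' -> 0 <= (p l' *: (psi l' *m dag (psi l'))) a a.
  by move=> _; rewrite mxE outer_entry; apply: mulr_ge0; [exact: ltW | exact: mul_conjC_ge0].
have /eqP := psumr_eq0P ge0 sum0 (i := l) isT.
by rewrite mxE outer_entry mulf_eq0 gt_eqF //= mul_conjC_eq0 => /eqP.
Qed.

End MatrixToolkit.

Section ControlledShift.
Variable C : numClosedFieldType.
Variables (d : nat) (hd : (0 < d)%N).
Local Notation o := (ord0' hd).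

Lemma addmod0 i : addmod hd o i = i.
Proof. by apply: val_inj; rewrite /= add0n modn_small. Qed.

Lemma UcdE : Ucd C hd = \sum_i \sum_j delta_mx (pr i (addmod hd j i)) (pr i j).
Proof.
apply: eq_bigr => i _; apply: eq_bigr => j _.
by rewrite /ket !kron_delta dag_delta mul_delta_mx.
Qed.

Lemma dagUcdE :
  dag (Ucd C hd) = \sum_i \sum_j delta_mx (pr i j) (pr i (addmod hd j i)).
Proof.
rewrite UcdE dag_sum; apply: eq_bigr => i _; rewrite dag_sum.
by apply: eq_bigr => j _; rewrite dag_delta.
Qed.

Lemma Ucd_copy_left n i (q : 'I_n) :
  Ucd C hd *m delta_mx (pr i o) q = delta_mx (pr i i) q.
Proof.
rewrite UcdE mulmx_suml.
transitivity (\sum_k \sum_l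
  (delta_mx (pr k (addmod hd l k)) q : 'M[C]_(d * d, n)) *+ ((k == i) && (l == o))).
  apply: eq_bigr => k _; rewrite mulmx_suml; apply: eq_bigr => l _.
  by rewrite mul_delta_mx_cond pr_eq.
by rewrite (sum2_delta (fun k l => delta_mx (pr k (addmod hd l k)) q)) addmod0.
Qed.

Lemma Ucd_copy_right n (q : 'I_n) j :
  delta_mx q (pr j o) *m dag (Ucd C hd) = delta_mx q (pr j j).
Proof.
rewrite dagUcdE mulmx_sumr.
transitivity (\sum_k \sum_l
  (delta_mx q (pr k (addmod hd l k)) : 'M[C]_(n, d * d)) *+ ((k == j) && (l == o))).
  apply: eq_bigr => k _; rewrite mulmx_sumr; apply: eq_bigr => l _.
  by rewrite mul_delta_mx_cond pr_eq (eq_sym j) (eq_sym o).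
by rewrite (sum2_delta (fun k l => delta_mx q (pr k (addmod hd l k)))) addmod0.
Qed.

Lemma output_expand (rho : 'M[C]_d) :
  output hd rho = \sum_i \sum_j rho i j *: delta_mx (pr i i) (pr j j).
Proof.
rewrite /output /ket dag_delta mul_delta_mx {1}(matrix_sum_delta rho).
rewrite kron_suml mulmx_sumr mulmx_suml; apply: eq_bigr => i _.
rewrite kron_suml mulmx_sumr mulmx_suml; apply: eq_bigr => j _.
by rewrite kronZl kron_delta -scalemxAr -scalemxAl Ucd_copy_left Ucd_copy_right.
Qed.

Lemma output_diag (rho : 'M[C]_d) i j : output hd rho (pr i i) (pr j j) = rho i j.
Proof.
rewrite output_expand summxE -[RHS](sum2_delta (fun i' j' => rho i' j')).
apply: eq_bigr => i' _; rewrite summxE; apply: eq_bigr => j' _.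
by rewrite !mxE !pr_eq !andbb mulr_natr (eq_sym i) (eq_sym j).
Qed.

Lemma output_offdiag (rho : 'M[C]_d) a :
  (unpair a).1 != (unpair a).2 -> output hd rho a a = 0.
Proof.
move=> na; rewrite output_expand summxE; apply: big1 => i _; rewrite summxE.
apply: big1 => j _; rewrite !mxE eq_pr.
case: eqP => [ea|]; last by rewrite mulr0.
by move: na; rewrite ea eqxx.
Qed.

End ControlledShift.

Section DiagonalEmbedding.
Variable C : numClosedFieldType.
Variable d : nat.

Definition emb (v : 'cV[C]_d) : 'cV[C]_(d * d) :=
  \sum_i v i 0 *: delta_mx (pr i i) 0.

Lemma emb_pr v x y : emb v (pr x y) 0 = if x == y then v x 0 else 0.
Proof.
rewrite summxE; under eq_bigr => i _ do rewrite !mxE pr_eq eqxx andbT.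
case: eqP => [<-|nxy].
  rewrite (eq_bigr (fun i => (x == i)%:R * v i 0)) ?sum_delta_l // => i _.
  by rewrite andbb mulrC.
apply: big1 => i _; case: (x =P i) => [<-|]; last by rewrite mulr0.
by case: (y =P x) => [eyx|]; [case: nxy | rewrite andbF mulr0].
Qed.

Lemma emb_entry v a :
  emb v a 0 = if (unpair a).1 == (unpair a).2 then v (unpair a).1 0 else 0.
Proof. by rewrite -{1}(unpairV a) emb_pr. Qed.

Lemma emb_outer v : emb v *m dag (emb v)
  = \sum_i \sum_j (v i 0 * (v j 0)^*) *: delta_mx (pr i i) (pr j j).
Proof.
rewrite dag_sum mulmx_suml; apply: eq_bigr => i _.
rewrite mulmx_sumr; apply: eq_bigr => j _.
by rewrite dagZ dag_delta -scalemxAl -scalemxAr mul_delta_mx scalerA.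
Qed.

Lemma emb_norm v : (dag (emb v) *m emb v) 0 0 = (dag v *m v) 0 0.
Proof.
rewrite [RHS]mxE dag_sum mulmx_suml summxE; apply: eq_bigr => i _.
rewrite /emb mulmx_sumr summxE dagE -(sum_delta_r (fun j => (v i 0)^* * v j 0) i).
apply: eq_bigr => j _.
rewrite dagZ dag_delta -scalemxAl -scalemxAr mul_delta_mx_cond pr_eq andbb.
by rewrite scalerA !mxE mulmxnE mxE !eqxx eq_sym.
Qed.

(* Part 1a: v_i = |v_i| (v_i/|v_i|) turns the support of v into a Schmidt
   decomposition of emb v with r(v) terms. *)
Lemma emb_schmidt_rank_le (v : 'cV[C]_d) : schmidt_rank_le (emb v) (sup_number v).
Proof.
set S := [set i | v i 0 != 0]; exists #|S|; split => //.
pose f (k : 'I_#|S|) : 'I_d := enum_val k.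
have fS k : v (f k) 0 != 0 by have := enum_valP k; rewrite inE.
have finj : injective f by exact: enum_val_inj.
have nzn k : `|v (f k) 0| != 0 by rewrite normr_eq0.
exists (fun k => `|v (f k) 0|),
       (fun k => (v (f k) 0 / `|v (f k) 0|) *: delta_mx (f k) 0),
       (fun k => delta_mx (f k) 0); split.
- by move=> k; rewrite normr_gt0.
- move=> k l; rewrite dagZ -scalemxAl -scalemxAr scalerA mxE ket_inner.
  rewrite (inj_eq finj); case: eqP => [->|_]; last by rewrite mulr0.
  by rewrite mulr1 -normCKC normrM normfV normr_id divff // expr1n.
- by move=> k l; rewrite ket_inner (inj_eq finj).
rewrite /emb (bigID (mem S)) /= [X in _ + X]big1 ?addr0; last first.
  by move=> i; rewrite inE negbK => /eqP ->; rewrite scale0r.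
rewrite big_enum_val; apply: eq_bigr => k _.
rewrite kronZl kron_delta scalerA mulrCA divff // mulr1.
by congr (_ *: delta_mx _ _); rewrite [RHS]ord1.
Qed.

(* The superposition number of v is at most the rank of diag(v): the
   principal submatrix on the support of v is invertible. *)
Lemma sup_number_le_rank_diag (v : 'cV[C]_d) :
  (sup_number v <= \rank (diag_mx v^T))%N.
Proof.
set S := [set i | v i 0 != 0].
pose f (k : 'I_#|S|) : 'I_d := enum_val k.
have fS k : v (f k) 0 != 0 by have := enum_valP k; rewrite inE.
have finj : injective f by exact: enum_val_inj.
pose P : 'M[C]_(#|S|, d) := \matrix_(k, i) (i == f k)%:R.
pose Q : 'M[C]_(d, #|S|) := \matrix_(i, k) (i == f k)%:R.
have subE : P *m diag_mx v^T *m Q = diag_mx (\row_k v (f k) 0).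
  apply/matrixP => k l; rewrite !mxE.
  rewrite (eq_bigr (fun j => diag_mx v^T (f k) j * (j == f l)%:R)) => [|j _].
    by rewrite sum_delta_r !mxE (inj_eq finj).
  rewrite [Q j l]mxE mxE (eq_bigr (fun i => (f k == i)%:R * diag_mx v^T i j)).
    by rewrite sum_delta_l.
  by move=> i _; rewrite mxE eq_sym.
have subU : P *m diag_mx v^T *m Q \in unitmx.
  rewrite unitmxE subE det_diag unitfE prodf_seq_neq0.
  by apply/allP => k _; rewrite /= mxE fS.
rewrite /sup_number -/S -{1}(mxrank_unit subU).
by rewrite (leq_trans (mxrankM_maxl _ _)) // mxrankM_maxr.
Qed.

(* Part 1b: a Schmidt decomposition of emb v with r terms factors diag(v)
   through C^r, so r(v) <= r. *)
Lemma sup_number_le_schmidt (v : 'cV[C]_d) r :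
  schmidt_decomp (emb v) r -> (sup_number v <= r)%N.
Proof.
case=> lam [u [w [_ _ _ Ev]]].
pose U : 'M[C]_(d, r) := \matrix_(i, k) u k i 0.
pose W : 'M[C]_(r, d) := \matrix_(k, j) (lam k * w k j 0).
have diagE : diag_mx v^T = U *m W.
  apply/matrixP => i j; transitivity (emb v (pr i j) 0).
    by rewrite emb_pr !mxE; case: (i =P j) => [->|].
  rewrite Ev summxE mxE; apply: eq_bigr => k _; rewrite /kron !mxE unpairK /=.
  by rewrite [(unpair _).1]ord1 [(unpair _).2]ord1 mulrCA mulrA.
apply: leq_trans (sup_number_le_rank_diag v) _.
by rewrite diagE (leq_trans (mxrankM_maxl _ _)) // rank_leq_col.
Qed.

End DiagonalEmbedding.

Section Correspondence.
Variable C : numClosedFieldType.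
Variables (d : nat) (hd : (0 < d)%N).

(* rho |-> rho' is injective: rho is read off the |ii><jj| entries of rho'. *)
Lemma output_inj : injective (@output C d hd).
Proof. by move=> rho sigma eq_out; apply/matrixP => i j; rewrite -!(output_diag hd) eq_out. Qed.

Lemma output_pure_comb N (p : 'I_N -> C) (psi : 'I_N -> 'cV[C]_d) :
  output hd (\sum_l p l *: (psi l *m dag (psi l)))
  = \sum_l p l *: (emb (psi l) *m dag (emb (psi l))).
Proof.
under [RHS]eq_bigr => l _ do rewrite emb_outer scaler_sumr.
rewrite exchange_big output_expand; apply: eq_bigr => i _.
under [RHS]eq_bigr => l _ do rewrite scaler_sumr.
rewrite exchange_big; apply: eq_bigr => j _.
rewrite summxE scaler_suml; apply: eq_bigr => l _.
by rewrite mxE outer_entry scalerA.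
Qed.

(* Part 2b: every pure component of a decomposition of rho' lies in the image
   of emb, since rho' vanishes at |ab><ab| for a <> b. *)
Lemma output_component_diagonal (rho : 'M[C]_d) N (p : 'I_N -> C)
    (Psi : 'I_N -> 'cV[C]_(d * d)) :
  (forall l, 0 < p l) ->
  output hd rho = \sum_l p l *: (Psi l *m dag (Psi l)) ->
  forall l, Psi l = emb (\col_i Psi l (pr i i) 0).
Proof.
move=> pp rhoE l; apply/matrixP => a b; rewrite [b]ord1 emb_entry.
case: ifP => [/eqP eq_ab|/negbT ne_ab]; first by rewrite mxE {2}eq_ab unpairV.
by apply: pure_comb_diag_eq0 pp _ l; rewrite -rhoE output_offdiag.
Qed.

Lemma sup_number_le_output (rho : 'M[C]_d) k :
  sup_number_le rho k <-> schmidt_number_le (output hd rho) k.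
Proof.
split=> [[N [p [psi [pp unit_psi le_psi rhoE]]]]|[N [p [Psi [pp unit_Psi le_Psi rhoE]]]]].
  exists N, p, (fun l => emb (psi l)); split => // [l|l|].
  - by rewrite /unit_vec emb_norm; exact: unit_psi.
  - have [r [le_r sd]] := emb_schmidt_rank_le (psi l).
    by exists r; split => //; exact: leq_trans le_r (le_psi l).
  by rewrite rhoE output_pure_comb.
have PsiE := output_component_diagonal pp rhoE.
pose psi l : 'cV[C]_d := \col_i Psi l (pr i i) 0.
exists N, p, psi; split => // [l|l|].
- by rewrite /unit_vec -emb_norm -PsiE; exact: unit_Psi.
- have [r [le_r sd]] := le_Psi l; rewrite PsiE in sd.
  exact: leq_trans (sup_number_le_schmidt sd) le_r.
apply: output_inj; rewrite rhoE output_pure_comb.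
by apply: eq_bigr => l _; rewrite -PsiE.
Qed.

End Correspondence.

Lemma convex_comb_lt (R : numDomainType) N (p x : 'I_N -> R) t :
  (forall l, 0 < p l) -> \sum_l p l = 1 -> (forall l, x l < t) ->
  \sum_l p l * x l < t.
Proof.
move=> pp sum1 xt; case: N p x pp sum1 xt => [|N] p x pp sum1 xt.
  by move: sum1; rewrite big_ord0 => /eqP; rewrite eq_sym oner_eq0.
rewrite -[ltRHS]mul1r -sum1 mulr_suml; apply: ltr_sum => [|l _].
  by apply/hasP; exists ord0 => //; exact: mem_index_enum.
by rewrite ltr_pM2l.
Qed.

Section ClassicalWitness.
Variable C : numClosedFieldType.
Variables (n : nat) (hn : (0 < n)%N).

Lemma sup_number_le1_ket (v : 'cV[C]_n) :
  (sup_number v <= 1)%N -> exists i, v = v i 0 *: ket C i.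
Proof.
move=> le1; case: (pickP (fun i => v i 0 != 0)) => [i vi|v0].
  exists i; apply/matrixP => a b; rewrite [b]ord1 !mxE eqxx andbT.
  case: (a =P i) => [->|nai]; first by rewrite mulr1.
  rewrite mulr0; apply/eqP/negPn/negP => va; apply: nai.
  by apply: (card_le1_eqP le1); rewrite inE.
exists (Ordinal hn); apply/matrixP => a b.
by rewrite [b]ord1 !mxE (eqP (negbFE (v0 a))) (eqP (negbFE (v0 (Ordinal hn)))) mul0r.
Qed.

Lemma classical_pure_expectation (M : 'M[C]_n) (psi : 'cV[C]_n) :
  unit_vec psi -> (sup_number psi <= 1)%N ->
  exists i, \tr (M *m (psi *m dag psi)) = (dag (ket C i) *m M *m ket C i) 0 0.
Proof.
move=> unit_psi /sup_number_le1_ket[i psiE]; exists i.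
have quadE (A : 'M[C]_n) : dag psi *m A *m psi
    = ((psi i 0)^* * psi i 0) *: (dag (ket C i) *m A *m ket C i).
  by rewrite {1 2}psiE dagZ -!scalemxAl -scalemxAr scalerA.
have norm1 : (psi i 0)^* * psi i 0 = 1.
  move: unit_psi; rewrite /unit_vec -[dag psi]mulmx1 quadE mulmx1 mxE.
  by rewrite ket_inner eqxx mulr1.
by rewrite trace_outer quadE norm1 scale1r.
Qed.

(* Part 3: for a classical state Tr(M rho) is a convex combination of the
   diagonal entries <i|M|i>, so it cannot exceed all of them. *)
Lemma classical_trace_bound (rho M : 'M[C]_n) :
  \tr rho = 1 -> sup_number_le rho 1 ->
  ~ (forall i, (dag (ket C i) *m M *m ket C i) 0 0 < \tr (M *m rho)).
Proof.
move=> tr1 [N [p [psi [pp unit_psi le1_psi rhoE]]]] lt_diag.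
have lt_pure l : \tr (M *m (psi l *m dag (psi l))) < \tr (M *m rho).
  by have [i ->] := classical_pure_expectation M (unit_psi l) (le1_psi l); exact: lt_diag.
have tr_pure l : \tr (psi l *m dag (psi l)) = 1.
  by rewrite mxtrace_mulC /mxtrace big_ord1; exact: unit_psi.
have sum1 : \sum_l p l = 1.
  by rewrite -tr1 rhoE trace_comb; apply: eq_bigr => l _; rewrite tr_pure mulr1.
have := convex_comb_lt pp sum1 lt_pure.
rewrite -trace_comb (eq_bigr _ (fun l _ => scalemxAr (p l) M _)) -mulmx_sumr.
by rewrite -rhoE ltxx.
Qed.

End ClassicalWitness.

Unset Implicit Arguments.
Set Strict Implicit.

Theorem mainTheorem10 (C : numClosedFieldType) (d : nat) (hd : (0 < d)%N)
    (rho : 'M[C]_d) (Hrho : density rho) :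
  (forall k : nat, is_SN (output hd rho) k <-> is_NS rho k) /\
  (entangled (output hd rho) <-> nonclassical rho) /\
  (forall M : 'M[C]_d, is_hermitian M ->
     (forall i : 'I_d, (dag (ket C i) *m M *m ket C i) 0 0 < \tr (M *m rho)) ->
     entangled (output hd rho)).
Proof.
have equiv := sup_number_le_output hd rho.
split; [|split].
- move=> k; split=> -[le_k min_k]; split.
  + exact/equiv.
  + by move=> m /equiv; exact: min_k.
  + exact/equiv.
  + by move=> m /equiv; exact: min_k.
- by split=> not_classical /equiv.
- move=> M _ lt_diag /equiv classical_rho.
  exact: (classical_trace_bound hd (proj2 Hrho) classical_rho lt_diag).
Qed.
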